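(* Let $L$ be the generator (with domain $D(L)$) of a conservative Markov process having a stationary distribution $\nu$, and define $\mathcal{E}(f,g)=-\int Lf(x)g(x)\,\nu(dx)$ for $f,g\in D(L)$. If $\mathcal{E}$ is not symmetric, then $\mathrm{Sect}(\mathcal{E})>1$.
   Context: The sector constant $\mathrm{Sect}(\mathcal{E})$ is the infimum of all finite constants $C$ such that $\mathcal{E}(f,g)\le C\,\mathcal{E}(f,f)^{1/2}\mathcal{E}(g,g)^{1/2}$ for all $f,g\in D(L)$, and $\mathrm{Sect}(\mathcal{E})=\infty$ if no such $C$ exists. (Here $\mathcal{E}(f,f)\ge0$.) *)

From HB Require Import structures.
From mathcomp Require Import all_boot all_order all_algebra.
From mathcomp Require Import all_classical all_reals all_analysis.
Set Implicit Arguments. Unset Strict Implicit. Unset Printing Implicit Defensive.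
Import Order.TTheory GRing.Theory Num.Theory.
Import numFieldNormedType.Exports.
Local Open Scope classical_set_scope.
Local Open Scope ring_scope.

Section MarkovDefs.
Context {d : measure_display} {T : measurableType d} {R : realType}.

(* A time-homogeneous conservative Markov transition function (P_t)_{t>=0}:
   each P t is a probability kernel (conservativity: P t x setT = 1),
   P 0 x = dirac x, and Chapman--Kolmogorov holds. *)
Definition markov_transition (P : R -> R.-pker T ~> T) : Prop :=
  (forall x A, measurable A -> P 0 x A = \d_x A) /\
  (forall s t, 0 <= s -> 0 <= t -> forall x A, measurable A ->
     P (s + t) x A = (\int[P s x]_y P t y A)%E).

Definition stationary (P : R -> R.-pker T ~> T) (nu : probability T R) : Prop :=
  forall t, 0 <= t -> forall A, measurable A ->
    (\int[nu]_x P t x A)%E = nu A.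

Definition Pt (P : R -> R.-pker T ~> T) (t : R) (f : T -> R) (x : T) : R :=
  fine (\int[P t x]_y (f y)%:E)%E.

Definition L2 (nu : probability T R) (f : T -> R) : Prop :=
  measurable_fun setT f /\ (\int[nu]_x ((f x) ^+ 2)%:E < +oo)%E.

(* g is (a version of) L f, where L is the generator of the semigroup in
   L^2(nu):  (P_t f - f)/t -> g in L^2(nu) as t -> 0+.  The domain D(L) is the
   set of f for which such a g exists. *)
Definition generator (P : R -> R.-pker T ~> T) (nu : probability T R)
  (f g : T -> R) : Prop :=
  L2 nu f /\ L2 nu g /\
  ((fun t => \int[nu]_x ((((Pt P t f x - f x) / t) - g x) ^+ 2)%:E)%E
     @ 0^'+ --> 0%E).

Definition dform (nu : probability T R) (Lf h : T -> R) : R :=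
  - fine (\int[nu]_x (Lf x * h x)%:E)%E.

Definition sector_bound (P : R -> R.-pker T ~> T) (nu : probability T R)
  (C : R) : Prop :=
  forall f Lf g Lg, generator P nu f Lf -> generator P nu g Lg ->
    dform nu Lf g <= C * Num.sqrt (dform nu Lf f) * Num.sqrt (dform nu Lg g).

(* Sect(E): infimum of admissible finite constants, +oo if there is none *)
Definition Sect (P : R -> R.-pker T ~> T) (nu : probability T R) : \bar R :=
  ereal_inf [set C%:E | C in [set C : R | sector_bound P nu C]].

Definition dform_symmetric (P : R -> R.-pker T ~> T) (nu : probability T R) :
  Prop :=
  forall f Lf g Lg, generator P nu f Lf -> generator P nu g Lg ->
    dform nu Lf g = dform nu Lg f.

End MarkovDefs.

From HB Require Import structures.
From mathcomp Require Import all_boot all_order all_algebra.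
From mathcomp Require Import all_classical all_reals all_analysis.
From mathcomp Require Import measurable_realfun.
From mathcomp Require Import ring lra.
Set Implicit Arguments. Unset Strict Implicit. Unset Printing Implicit Defensive.
Import Order.TTheory GRing.Theory Num.Theory.
Import numFieldNormedType.Exports.
Local Open Scope classical_set_scope.
Local Open Scope ring_scope.

(* Suppose Sect(E) <= 1, so that E(f,g) <= E(f,f)^(1/2) E(g,g)^(1/2) on D(L).
   Stationarity of nu makes every f in L^2(nu) integrable against P_t(x,.) for
   nu-almost every x, so P_t, hence L, acts linearly on D(L) and E is bilinear
   there.  For a bilinear form this Cauchy-Schwarz bound with constant 1 forces
   symmetry: applied to f and f + s g and combined with AM-GM it gives
   s (E(f,g) - E(g,f)) <= s^2 E(g,g) for every real s, whence E(f,g) = E(g,f). *)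

Lemma linear_le_quadratic_eq0 (R : realFieldType) (a b : R) :
  0 <= b -> (forall s, s * a <= s ^+ 2 * b) -> a = 0.
Proof.
move=> b0 le_ab; have b1_gt0 : 0 < b + 1 by lra.
have := le_ab (a / (2 * (b + 1))); rewrite expr2.
set s := a / _; have -> : a = s * (2 * (b + 1)).
  by rewrite /s divfK // mulf_neq0 // lt0r_neq0.
move=> le_s; have s0 : s * s = 0.
  by apply/eqP; rewrite eq_le -expr2 sqr_ge0 andbT; nra.
by move/eqP: s0; rewrite mulf_eq0 orbb => /eqP ->; rewrite mul0r.
Qed.

Lemma sqrt_mul_le_mean (R : rcfType) (x y : R) : 0 <= x -> 0 <= y ->
  Num.sqrt x * Num.sqrt y <= (x + y) / 2.
Proof.
move=> x0 y0; have := sqr_ge0 (Num.sqrt x - Num.sqrt y).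
by rewrite sqrrB !sqr_sqrtr // => ?; lra.
Qed.

Lemma sqr_comb_le (R : realFieldType) (a b x y : R) :
  (a * x + b * y) ^+ 2 <= 2 * a ^+ 2 * x ^+ 2 + 2 * b ^+ 2 * y ^+ 2.
Proof. by have := sqr_ge0 (a * x - b * y); rewrite !expr2 => ?; nra. Qed.

Section sector_constant_one.
Variables (R : rcfType) (U : Type) (D : U -> Prop).
Variables (comb : R -> R -> U -> U -> U) (E : U -> U -> R).
Hypothesis D_comb : forall a b u v, D u -> D v -> D (comb a b u v).
Hypothesis E_combl : forall a b u v w, D u -> D v -> D w ->
  E (comb a b u v) w = a * E u w + b * E v w.
Hypothesis E_combr : forall a b u v w, D u -> D v -> D w ->
  E w (comb a b u v) = a * E w u + b * E w v.
Hypothesis E_sector : forall u v, D u -> D v ->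
  E u v <= Num.sqrt (E u u) * Num.sqrt (E v v).

Lemma sector_one_ge0 u : D u -> 0 <= E u u.
Proof.
(* Test the bound on u and -u: -E(u,u) <= 0 when E(u,u) < 0, as sqrt is 0 there. *)
move=> Du; have Dw := D_comb (-1) 0 Du Du.
have := E_sector Du Dw.
rewrite E_combl // !E_combr //.
have [//|Euu_lt0] := lerP 0 (E u u).
rewrite ler0_sqrtr ?mul0r => [?|]; lra.
Qed.

Lemma sector_one_sym u v : D u -> D v -> E u v = E v u.
Proof.
move=> Du Dv; apply/eqP; rewrite -subr_eq0; apply/eqP.
apply: (linear_le_quadratic_eq0 (sector_one_ge0 Dv)) => s.
have Dw := D_comb 1 s Du Dv.
have := le_trans (E_sector Du Dw)
  (sqrt_mul_le_mean (sector_one_ge0 Du) (sector_one_ge0 Dw)).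
rewrite E_combl // !E_combr // expr2 => ?; nra.
Qed.

End sector_constant_one.

Section square_integrable.
Context (d : measure_display) (T : measurableType d) (R : realType).
Implicit Types (mu : probability T R) (f g : T -> R).

Lemma measurable_EFin_sqr f : measurable_fun setT f ->
  measurable_fun setT (fun x => (f x ^+ 2)%:E).
Proof. by move=> mf; apply/measurable_EFinP; exact: measurable_funX. Qed.

Lemma Lfun2_sqr (mu : {measure set T -> \bar R}) f : measurable_fun setT f ->
  (\int[mu]_x (f x ^+ 2)%:E < +oo)%E -> f \in Lfun mu 2%:E.
Proof.
move=> mf f2_fin; rewrite inE; apply/andP; split; first by rewrite inE.
rewrite inE /= /finite_norm unlock /Lnorm poweR_lty //.
rewrite (eq_integral (fun x => (f x ^+ 2)%:E)) // => x _.
by rewrite /= powR_mulrn ?real_normK ?num_real.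
Qed.

Lemma L2_Lfun2 mu f : L2 mu f <-> f \in Lfun mu 2%:E.
Proof.
split=> [[mf f2_fin]|lf]; first exact: Lfun2_sqr.
split; first by move: lf => /andP[+ _]; rewrite inE.
move/Lfun2_integrable_sqr/integrableP: lf => [_ lf].
rewrite (eq_integral (fun x => (f x ^+ 2)%:E)) in lf => // x _.
by rewrite /= ger0_norm ?sqr_ge0.
Qed.

Lemma L2_comb mu (a b : R) f g : L2 mu f -> L2 mu g ->
  L2 mu (fun x => a * f x + b * g x).
Proof.
move=> /L2_Lfun2 lf /L2_Lfun2 lg; apply/L2_Lfun2.
have two_ge1 : (1 <= 2%:E :> \bar R)%E by rewrite lee1n.
by have /(_ two_ge1) := rpredD (rpredZ a lf) (rpredZ b lg).
Qed.

Lemma Lfun2_integrable (mu : {measure set T -> \bar R}) f :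
  mu setT \is a fin_num -> f \in Lfun mu 2%:E ->
  mu.-integrable setT (EFin \o f).
Proof. by move=> mu_fin lf; apply/Lfun1_integrable/(Lfun_subset12 mu_fin lf). Qed.

Lemma L2_integrable_mul mu f g : L2 mu f -> L2 mu g ->
  mu.-integrable setT (EFin \o (fun x => f x * g x)).
Proof.
by move=> /L2_Lfun2 lf /L2_Lfun2 lg; apply/Lfun1_integrable/Lfun2_mul_Lfun1.
Qed.

Lemma integral_sqr_comb_le mu (a b : R) f g :
  measurable_fun setT f -> measurable_fun setT g ->
  (\int[mu]_x ((a * f x + b * g x) ^+ 2)%:E <=
    (2 * a ^+ 2)%:E * \int[mu]_x (f x ^+ 2)%:E +
    (2 * b ^+ 2)%:E * \int[mu]_x (g x ^+ 2)%:E)%E.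
Proof.
move=> mf mg; have c_ge0 (c : R) : 0 <= 2 * c ^+ 2 by rewrite mulr_ge0 ?sqr_ge0.
rewrite -!ge0_integralZl ?lee_fin ?c_ge0 //; last 4 first.
- exact: measurable_EFin_sqr.
- by move=> x _; rewrite lee_fin sqr_ge0.
- exact: measurable_EFin_sqr.
- by move=> x _; rewrite lee_fin sqr_ge0.
rewrite -ge0_integralD //; last 4 first.
- by move=> x _; rewrite mule_ge0 ?lee_fin ?c_ge0 ?sqr_ge0.
- exact/measurable_funeM/measurable_EFin_sqr.
- by move=> x _; rewrite mule_ge0 ?lee_fin ?c_ge0 ?sqr_ge0.
- exact/measurable_funeM/measurable_EFin_sqr.
apply: ge0_le_integral => //.
- by move=> x _; rewrite lee_fin sqr_ge0.
- apply/measurable_EFin_sqr/measurable_funD.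
  + exact: measurable_funM.
  + exact: measurable_funM.
- by apply: emeasurable_funD; exact/measurable_funeM/measurable_EFin_sqr.
- by move=> x _; rewrite -!EFinM -EFinD lee_fin sqr_comb_le.
Qed.

Lemma Rintegral_comb (mu : {measure set T -> \bar R}) (a b : R) f g :
  mu.-integrable setT (EFin \o f) -> mu.-integrable setT (EFin \o g) ->
  \int[mu]_x (a * f x + b * g x) = a * \int[mu]_x f x + b * \int[mu]_x g x.
Proof.
move=> f_int g_int; have intZ (c : R) h : mu.-integrable setT (EFin \o h) ->
    mu.-integrable setT (EFin \o (fun x => c * h x)).
  move=> ih; apply: (eq_integrable measurableT _ _ _ (integrableZl measurableT c ih)).
  by move=> x _.
by rewrite RintegralD ?RintegralZl ?intZ.
Qed.

Lemma dformE mu Lf h : dform mu Lf h = - \int[mu]_x (Lf x * h x).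
Proof. by []. Qed.

Lemma dform_combl mu (a b : R) Lf Lg h : L2 mu Lf -> L2 mu Lg -> L2 mu h ->
  dform mu (fun x => a * Lf x + b * Lg x) h = a * dform mu Lf h + b * dform mu Lg h.
Proof.
move=> Lf2 Lg2 h2; rewrite !dformE.
transitivity (- \int[mu]_x (a * (Lf x * h x) + b * (Lg x * h x))).
  by congr (- fine _); apply: eq_integral => x _; congr (_%:E); ring.
by rewrite Rintegral_comb ?L2_integrable_mul //; ring.
Qed.

Lemma dform_combr mu (a b : R) Lh f g : L2 mu Lh -> L2 mu f -> L2 mu g ->
  dform mu Lh (fun x => a * f x + b * g x) = a * dform mu Lh f + b * dform mu Lh g.
Proof.
move=> Lh2 f2 g2; rewrite !dformE.
transitivity (- \int[mu]_x (a * (Lh x * f x) + b * (Lh x * g x))).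
  by congr (- fine _); apply: eq_integral => x _; congr (_%:E); ring.
by rewrite Rintegral_comb ?L2_integrable_mul //; ring.
Qed.

End square_integrable.

Section invariant_kernel.
Context (d : measure_display) (T : measurableType d) (R : realType).
Local Open Scope ereal_scope.

Lemma integral_invariant_kernel (k : R.-spker T ~> T) (nu : probability T R)
    (f : T -> \bar R) :
  (forall A, measurable A -> \int[nu]_x k x A = nu A) ->
  (forall y, 0 <= f y) -> measurable_fun setT f ->
  \int[nu]_x \int[k x]_y f y = \int[nu]_y f y.
Proof.
(* Composing the constant kernel nu with k gives the measure A |-> \int k x A dnu = nu. *)
move=> k_nu f0 mf.
pose l := kprobability
  (measurable_cst (nu : pprobability T R) : measurable_fun [set: unit] _).
rewrite -(integral_kcomp l (kernel.kernel_snd k) tt f0 mf).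
by apply: eq_measure_integral => A mA _; rewrite /= /kcomp k_nu.
Qed.

Lemma measurable_Pt (P : R -> R.-pker T ~> T) t f : measurable_fun setT f ->
  measurable_fun setT (Pt P t f).
Proof.
move=> mf; apply: (measurableT_comp (fine_measurable measurableT)).
have mEf : measurable_fun setT (EFin \o f) by exact/measurable_EFinP.
rewrite (_ : (fun x => _) = (fun x => \int[P t x]_y (EFin \o f)^\+ y) \-
    (fun x => \int[P t x]_y (EFin \o f)^\- y)); last first.
  by apply/funext => x; rewrite integralE.
apply: emeasurable_funB; apply: measurable_fun_integral_kernel => //.
- by move=> U mU; exact: measurable_kernel.
- exact: measurable_funepos.
- by move=> U mU; exact: measurable_kernel.
- exact: measurable_funeneg.
Qed.

End invariant_kernel.

Section stationary_generator.
Context (d : measure_display) (T : measurableType d) (R : realType).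
Variables (P : R -> R.-pker T ~> T) (nu : probability T R).
Hypothesis P_nu : stationary P nu.
Implicit Types (f g Lf Lg : T -> R).

Lemma L2_kernel_integrable_ae t f : 0 <= t -> L2 nu f ->
  {ae nu, forall x, (P t x).-integrable setT (EFin \o f)}.
Proof.
move=> t0 [mf f2_fin]; have f2_ge0 y : (0 <= (f y ^+ 2)%:E)%E.
  by rewrite lee_fin sqr_ge0.
have mPf2 : measurable_fun setT (fun x => \int[P t x]_y (f y ^+ 2)%:E)%E.
  apply: measurable_fun_integral_kernel => //; last exact: measurable_EFin_sqr.
  by move=> U mU; exact: measurable_kernel.
have Pf2_int : nu.-integrable setT (fun x => \int[P t x]_y (f y ^+ 2)%:E)%E.
  apply/integrableP; split => //.
  under eq_integral do rewrite gee0_abs ?integral_ge0 //.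
  by rewrite integral_invariant_kernel //; [exact: P_nu|exact: measurable_EFin_sqr].
apply: filterS (integrable_ae measurableT Pf2_int) => x Pf2_fin.
apply: Lfun2_integrable; first by rewrite prob_kernel.
by apply: Lfun2_sqr => //; rewrite ltey_eq Pf2_fin.
Qed.

Lemma Pt_comb_ae t (a b : R) f g : 0 <= t -> L2 nu f -> L2 nu g ->
  {ae nu, forall x,
    Pt P t (fun y => a * f y + b * g y) x = a * Pt P t f x + b * Pt P t g x}.
Proof.
move=> t0 f2 g2; apply: filterS2 (L2_kernel_integrable_ae t0 f2)
  (L2_kernel_integrable_ae t0 g2) => x Pf_int Pg_int.
exact: Rintegral_comb.
Qed.

Let dquot t f Lf x := (Pt P t f x - f x) / t - Lf x.

Let measurable_dquot t f Lf : measurable_fun setT f -> measurable_fun setT Lf ->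
  measurable_fun setT (dquot t f Lf).
Proof.
move=> mf mLf; apply: measurable_funB => //; apply: measurable_funM => //.
by apply: measurable_funB => //; exact: measurable_Pt.
Qed.

Lemma generator_comb (a b : R) f Lf g Lg :
  generator P nu f Lf -> generator P nu g Lg ->
  generator P nu (fun x => a * f x + b * g x) (fun x => a * Lf x + b * Lg x).
Proof.
move=> [f2 [Lf2 dqf]] [g2 [Lg2 dqg]]; split; first exact: L2_comb.
split; first exact: L2_comb.
apply: (@squeeze_cvge _ _ _ _ (cst 0%E) _ (fun t =>
  (2 * a ^+ 2)%:E * \int[nu]_x (dquot t f Lf x ^+ 2)%:E +
  (2 * b ^+ 2)%:E * \int[nu]_x (dquot t g Lg x ^+ 2)%:E)%E); last 2 first.
- exact: cvg_cst.
- have -> : 0%E = ((2 * a ^+ 2)%:E * 0 + (2 * b ^+ 2)%:E * 0)%E.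
    by rewrite !mule0 adde0.
  by apply: cvgeD => //; apply: cvgeZl.
near=> t; have t_gt0 : 0 < t by near: t; exact: nbhs_right_gt.
apply/andP; split; first by apply: integral_ge0 => x _; rewrite lee_fin sqr_ge0.
have [[mf _] [mg _]] := (f2, g2); have [[mLf _] [mLg _]] := (Lf2, Lg2).
rewrite (@ae_eq_integral _ _ _ _ _ (fun x =>
  ((a * dquot t f Lf x + b * dquot t g Lg x) ^+ 2)%:E)) //.
- by apply: integral_sqr_comb_le; exact: measurable_dquot.
- apply/measurable_EFin_sqr/measurable_dquot;
    by apply: measurable_funD; apply: measurable_funM.
- apply/measurable_EFin_sqr/measurable_funD;
    by apply: measurable_funM => //; exact: measurable_dquot.
apply: filterS (Pt_comb_ae a b (ltW t_gt0) f2 g2) => x Pt_comb _.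
by rewrite /dquot Pt_comb; congr (_%:E); congr (_ ^+ 2); rewrite mulrBl; ring.
Unshelve. all: by end_near.
Qed.

End stationary_generator.

Lemma sector_bound_one (d : measure_display) (T : measurableType d)
    (R : realType) (P : R -> R.-pker T ~> T) (nu : probability T R) :
  (Sect P nu <= 1%:E)%E -> sector_bound P nu 1.
Proof.
move=> Sect_le1 f Lf g Lg gf gg; rewrite mul1r.
set X := Num.sqrt _ * _; have X_ge0 : 0 <= X by rewrite mulr_ge0 ?sqrtr_ge0.
apply/ler_addgt0Pr => e e_gt0; have X1_gt0 : 0 < X + 1 by lra.
have : (Sect P nu < (1 + e / (X + 1))%:E)%E.
  by apply: le_lt_trans Sect_le1 _; rewrite lte_fin ltrDl divr_gt0.
move=> /ereal_inf_lt[_ [C C_bound <-]]; rewrite lte_fin => C_lt.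
apply: le_trans (C_bound f Lf g Lg gf gg) _; rewrite -mulrA -/X.
apply: le_trans (ler_wpM2r X_ge0 (ltW C_lt)) _.
rewrite mulrDl mul1r lerD2l -mulrA ler_piMr ?ltW // mulrC.
by rewrite ltr_pdivrMr // mul1r ltrDl.
Qed.

Theorem proposition3p1 (d : measure_display) (T : measurableType d)
  (R : realType) (P : R -> R.-pker T ~> T) (nu : probability T R) :
  markov_transition P -> stationary P nu -> ~ dform_symmetric P nu ->
  (1%:E < Sect P nu)%E.
Proof.
move=> _ P_nu not_sym; rewrite ltNge; apply/negP => /sector_bound_one sect1.
apply: not_sym => f Lf g Lg gf gg.
pose D (u : (T -> R) * (T -> R)) := generator P nu u.1 u.2.
pose comb a b (u v : (T -> R) * (T -> R)) :=
  (fun x => a * u.1 x + b * v.1 x, fun x => a * u.2 x + b * v.2 x).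
pose E (u v : (T -> R) * (T -> R)) := dform nu u.2 v.1.
apply: (@sector_one_sym _ _ D comb E _ _ _ _ (f, Lf) (g, Lg) gf gg).
- by move=> a b u v Du Dv; exact: generator_comb.
- move=> a b u v w [_ [Lu2 _]] [_ [Lv2 _]] [w2 _].
  exact: dform_combl.
- move=> a b u v w [u2 _] [v2 _] [_ [Lw2 _]].
  exact: dform_combr.
- by move=> u v Du Dv; have := sect1 _ _ _ _ Du Dv; rewrite mul1r.
Qed.
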